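(* Let $p$ be a pattern graph, $d$ a data graph, $V_c(p)$ a vertex cover of $p$, and $s: V_c(p)\to V(d)$ a skeleton. Let $M|s=\{f\in M(p,d) : f(u)=s(u)\text{ for all }u\in V_c(p)\}$. Suppose $|V_c(p)|=a$, $|V(p)\setminus V_c(p)|=b$, and $|M|s|=c\ge 1$. Then the compressed form $f|s$ of $M|s$ uses at least $a\cdot(c-1)$ fewer integers of storage than storing the $c$ matches of $M|s$ in plain form; that is, $c(a+b)-\mathrm{size}(f|s)\ge a(c-1)$.
   Context: Graphs are finite, simple and undirected. $p$ (the pattern) and $d$ (the data graph) are graphs, the vertices of $d$ carry a fixed total order, and $\mathbf{ord}$ is a set of ordered pairs of vertices of $p$ (a symmetry-breaking partial order). A match of $p$ in $d$ is an injective map $f:V(p)\to V(d)$ such that $(f(x),f(y))\in E(d)$ for every edge $(x,y)\in E(p)$ and $f(x)<f(y)$ for every $(x,y)\in\mathbf{ord}$; $M(p,d)$ is the set of all matches. A vertex cover of $p$ is a set $V_c(p)\subseteq V(p)$ containing at least one endpoint of every edge of $p$; a skeleton is a map $s:V_c(p)\to V(d)$. Storage model: each vertex occupies one integer; the plain form of a match stores $|V(p)|$ integers. The compressed form $f|s$ of $M|s$ stores $s$ (i.e. $|V_c(p)|$ integers) and, for each $v\in V(p)\setminus V_c(p)$, the set $f|s(v)=\{f(v): f\in M|s\}$ (i.e. $|f|s(v)|$ integers); so $\mathrm{size}(f|s)=|V_c(p)|+\sum_{v\in V(p)\setminus V_c(p)}|f|s(v)|$. *)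

From mathcomp Require Import all_boot all_order all_algebra.
Set Implicit Arguments. Unset Strict Implicit. Unset Printing Implicit Defensive.
Import Order.TTheory GRing.Theory Num.Theory.

Definition simple_graph (V : finType) (e : rel V) : Prop :=
  symmetric e /\ irreflexive e.

Definition vertex_cover (Vp : finType) (ep : rel Vp) (Vc : {set Vp}) : Prop :=
  forall x y, ep x y -> (x \in Vc) || (y \in Vc).

(* A match of pattern (Vp, ep) with symmetry-breaking order ordp
   in the data graph (Vd, ed) whose vertices are totally ordered. *)
Definition is_match (disp : Order.disp_t) (Vp : finType) (Vd : finOrderType disp)
  (ep : rel Vp) (ed : rel Vd) (ordp : {set Vp * Vp}) (f : {ffun Vp -> Vd}) : bool :=
  [&& injectiveb f,
      [forall x, forall y, ep x y ==> ed (f x) (f y)] &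
      [forall xy in ordp, (f xy.1 < f xy.2)%O]].

Definition matches (disp : Order.disp_t) (Vp : finType) (Vd : finOrderType disp)
  (ep : rel Vp) (ed : rel Vd) (ordp : {set Vp * Vp}) : {set {ffun Vp -> Vd}} :=
  [set f | is_match ep ed ordp f].

(* M|s : matches agreeing with skeleton s on the vertex cover Vc
   (s is given as a function on Vp; only its values on Vc matter). *)
Definition matches_s (disp : Order.disp_t) (Vp : finType) (Vd : finOrderType disp)
  (ep : rel Vp) (ed : rel Vd) (ordp : {set Vp * Vp}) (Vc : {set Vp}) (s : Vp -> Vd)
  : {set {ffun Vp -> Vd}} :=
  [set f in matches ep ed ordp | [forall u in Vc, f u == s u]].

Definition compressed_size (disp : Order.disp_t) (Vp : finType) (Vd : finOrderType disp)
  (ep : rel Vp) (ed : rel Vd) (ordp : {set Vp * Vp}) (Vc : {set Vp}) (s : Vp -> Vd)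
  : nat :=
  #|Vc| + \sum_(v in ~: Vc) #|[set (f : {ffun Vp -> Vd}) v | f in matches_s ep ed ordp Vc s]|.

From mathcomp Require Import all_boot all_order all_algebra.
From mathcomp Require Import zify.
Import Order.TTheory GRing.Theory Num.Theory.
Local Open Scope ring_scope.

(* Each of the b sets f|s(v) is an image of M|s, so it has at most c elements;
   hence size(f|s) <= a + b c, and c (a + b) - (a + b c) = a (c - 1). *)

Lemma sum_card_imset_leq (I T U : finType) (A : {set I}) (F : {set T})
    (g : I -> T -> U) :
  (\sum_(i in A) #|[set g i x | x in F]| <= #|A| * #|F|)%N.
Proof.
rewrite -sum_nat_const; apply: leq_sum => i _; exact: leq_imset_card.
Qed.

Lemma compressed_size_leq {disp : Order.disp_t} {Vp : finType}
    {Vd : finOrderType disp} (ep : rel Vp) (ed : rel Vd) (ordp : {set Vp * Vp})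
    (Vc : {set Vp}) (s : Vp -> Vd) :
  (compressed_size ep ed ordp Vc s
     <= #|Vc| + #|~: Vc| * #|matches_s ep ed ordp Vc s|)%N.
Proof. by rewrite leq_add2l sum_card_imset_leq. Qed.

Theorem mainTheorem1 (disp : Order.disp_t) (Vp : finType) (Vd : finOrderType disp)
  (ep : rel Vp) (ed : rel Vd) (ordp : {set Vp * Vp}) (Vc : {set Vp}) (s : Vp -> Vd)
  (a b c : nat) :
  simple_graph ep -> simple_graph ed -> vertex_cover ep Vc ->
  #|Vc| = a -> #|~: Vc| = b -> #|matches_s ep ed ordp Vc s| = c -> (1 <= c)%N ->
  ((c * (a + b))%:Z - (compressed_size ep ed ordp Vc s)%:Z >= (a * (c - 1))%:Z).
Proof.
move=> _ _ _ card_Vc card_nVc card_M c_gt0.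
have := compressed_size_leq ep ed ordp Vc s.
rewrite card_Vc card_nVc card_M.
nia.
Qed.
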